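(* Let $m\in\mathbb Z^+$, let $\sigma$ be a linear permutation of $\mathbb Z_m$, and let $\zeta_m$ be a primitive $m$-th root of unity. Suppose one of the following holds: (i) $q$ is a prime with $q=mf+1$ for some even integer $f$; let $\alpha$ be a generator of $\mathbb Z_q^*$, $D_k=\{\alpha^{mi+k}:0\le i\le f-1\}$, and let $\underline a$ be the sequence of period $q$ with $a_0=0$ and $a_i=\zeta_m^k$ for $i\in D_{\sigma(k)}$; (ii) $q=2p$ for a prime $p$ with $q=mf+l$, $f$ even and $l=p+1$; let $\alpha$ be a generator of the cyclic group $\mathbb Z_q^*$, $D_k=\{\alpha^{mi+k}:0\le i\le f-1\}$, and let $\underline a$ be the sequence of period $q$ with $a_i=\zeta_m^k$ for $i\in D_{\sigma(k)}$ and $a_i=0$ for $i\notin\mathbb Z_q^*$. Then $\underline a$ is symmetric except for $a_0$, i.e. $a_i=a_{q-i}$ for all $1\le i\le q-1$.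
   Context: A linear permutation of $\mathbb Z_m$ is a map $x\mapsto ux+v\pmod m$ with $\gcd(u,m)=1$. The sequences defined in (i) and (ii) are called almost $m$-ary $\sigma$-sequences. *)

From mathcomp Require Import all_boot all_order all_algebra all_field.
Set Implicit Arguments. Unset Strict Implicit. Unset Printing Implicit Defensive.
Import GRing.Theory Num.Theory.
Local Open Scope ring_scope.

(* Linear permutation of Z_m : k |-> u k + v (mod m), with gcd(u,m) = 1.
   Elements of Z_m are represented by naturals 0 <= k < m. *)
Definition linperm (m u v : nat) (k : nat) : nat := ((u * k + v) %% m)%N.

Definition unit_generator (q alpha : nat) : Prop :=
  coprime alpha q /\
  forall x : nat, (x < q)%N -> coprime x q -> exists e : nat, x = alpha ^ e %[mod q].

Definition inD (q m f alpha k x : nat) : Prop :=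
  exists2 i : nat, (i < f)%N & x = alpha ^ (m * i + k) %[mod q].

Definition has_period (q : nat) (a : nat -> algC) : Prop :=
  forall i : nat, a (i + q)%N = a i.

Definition almost_sigma_case1 (m u v : nat) (zeta : algC) (q : nat)
    (a : nat -> algC) : Prop :=
  exists f alpha : nat,
    [/\ prime q, q = (m * f + 1)%N, ~~ odd f, unit_generator q alpha &
       [/\ has_period q a, a 0%N = 0 &
        forall i k : nat, (i < q)%N -> (k < m)%N ->
          inD q m f alpha (linperm m u v k) i -> a i = zeta ^+ k]].

Definition almost_sigma_case2 (m u v : nat) (zeta : algC) (q : nat)
    (a : nat -> algC) : Prop :=
  exists p f alpha : nat,
    [/\ prime p, q = (2 * p)%N, q = (m * f + (p + 1))%N, ~~ odd f &
       [/\ unit_generator q alpha, has_period q a,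
        forall i k : nat, (i < q)%N -> (k < m)%N ->
          inD q m f alpha (linperm m u v k) i -> a i = zeta ^+ k &
        forall i : nat, (i < q)%N -> ~~ coprime i q -> a i = 0]].

(* Both moduli have a cyclic unit group of even order [totient q = m f] in which
   [1] and [-1] are the only square roots of unity.  Hence for a generator
   [alpha] and [h = m f / 2] we get [alpha ^ h = -1 (mod q)], i.e. negation on
   units is multiplication by [alpha ^ h].  Since [m] divides [h], negation maps
   every class [D_k] onto itself, so [a] takes the same value at [i] and [q - i];
   in case (ii) the non-units, which are also closed under negation, carry [0]. *)
From mathcomp Require Import all_boot all_order all_algebra all_field.
From mathcomp Require Import cyclic zify.

Set Implicit Arguments.
Unset Strict Implicit.
Unset Printing Implicit Defensive.

Lemma eqn_mod_coprimeMl u m k1 k2 : coprime u m ->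
  (u * k1 == u * k2 %[mod m]) = (k1 == k2 %[mod m]).
Proof.
move=> cop_um; wlog le_k12 : k1 k2 / k1 <= k2.
  move=> W; case: (leqP k1 k2) => [/W //|/ltnW /W].
  by rewrite eq_sym [in RHS]eq_sym.
rewrite eq_sym [in RHS]eq_sym !eqn_mod_dvd ?leq_mul2l ?le_k12 ?orbT //.
by rewrite -mulnBr Gauss_dvdr // coprime_sym.
Qed.

Lemma coprime_gt0 x q : 1 < q -> coprime x q -> 0 < x.
Proof.
by case: x => // q_gt1; rewrite /coprime gcd0n => /eqP q1; rewrite q1 in q_gt1.
Qed.

Lemma coprime_subnl i q : i <= q -> coprime (q - i) q = coprime i q.
Proof. by move=> le_iq; rewrite /coprime -{2 3}(subnK le_iq) gcdnDl gcdnDr gcdnC. Qed.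

Lemma linperm_onto m u v s : 0 < m -> coprime u m -> s < m ->
  exists2 k, k < m & linperm m u v k = s.
Proof.
move=> m_gt0 cop_um s_lt_m.
pose g (k : 'I_m) : 'I_m := Ordinal (ltn_pmod (u * k + v) m_gt0).
have g_inj : injective g.
  move=> k1 k2 /(congr1 val) /eqP; rewrite /= eqn_modDr eqn_mod_coprimeMl //.
  by rewrite !modn_small // => /eqP /val_inj.
have /codomP [k gk] := inj_card_onto g_inj (leqnn _) (Ordinal s_lt_m).
by exists k => //; move/(congr1 val): gk.
Qed.

Lemma expn_modn_period al h q : al ^ h = 1 %[mod q] ->
  forall E, al ^ E = al ^ (E %% h) %[mod q].
Proof.
move=> al_h E; rewrite {1}(divn_eq E h) expnD (mulnC (E %/ h)) expnM.
by rewrite -modnMml -modnXm al_h modnXm exp1n modnMml mul1n.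
Qed.

Lemma card_coprime_ord q : #|[set x : 'I_q | coprime q x]| = totient q.
Proof.
rewrite totient_count_coprime big_mkord -sum1dep_card.
rewrite [RHS](bigID (fun x : 'I_q => coprime q x)) /= [X in _ + X]big1 ?addn0.
  by apply: eq_bigr => i ->.
by move=> i /negbTE ->.
Qed.

Lemma totient_leq_period q al h : unit_generator q al -> 0 < h ->
  al ^ h = 1 %[mod q] -> totient q <= h.
Proof.
move=> [_ gen_al] h_gt0 al_h.
have [q0 | q_gt0] := posnP q; first by rewrite q0.
pose g (e : 'I_h) : 'I_q := Ordinal (ltn_pmod (al ^ e) q_gt0).
have units_sub : [set x : 'I_q | coprime q x] \subset g @: [set: 'I_h].
  apply/subsetP => x; rewrite inE coprime_sym => /(gen_al x (ltn_ord x)) [E xE].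
  apply/imsetP; exists (Ordinal (ltn_pmod E h_gt0)) => //; apply: val_inj => /=.
  by rewrite -(expn_modn_period al_h) -xE modn_small.
rewrite -card_coprime_ord (leq_trans (subset_leq_card units_sub)) //.
by rewrite (leq_trans (leq_imset_card _ _)) // cardsT card_ord.
Qed.

Definition trivial_sqrt1 q : Prop :=
  forall x, x < q -> coprime x q -> x * x = 1 %[mod q] -> x = 1 \/ x = q - 1.

Lemma sqrt1_mod_dvd q x : 0 < x -> x * x = 1 %[mod q] -> q %| (x - 1) * (x + 1).
Proof.
move=> x_gt0 xx; have -> : (x - 1) * (x + 1) = x * x - 1 by nia.
by rewrite -eqn_mod_dvd ?xx //; nia.
Qed.

Lemma trivial_sqrt1_prime p : prime p -> trivial_sqrt1 p.
Proof.
move=> p_pr x x_lt_p cop_xp xx; have p_gt1 := prime_gt1 p_pr.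
have x_gt0 := coprime_gt0 p_gt1 cop_xp.
move: (sqrt1_mod_dvd x_gt0 xx); rewrite Euclid_dvdM // => /orP [] p_dvd.
  have [x1 | /dvdn_leq /(_ p_dvd)] := posnP (x - 1); lia.
have /dvdn_leq /(_ p_dvd) : 0 < x + 1 by rewrite addn1.
lia.
Qed.

Lemma trivial_sqrt1_double_prime p : prime p -> odd p -> trivial_sqrt1 (2 * p).
Proof.
move=> p_pr p_odd x x_lt cop_x xx; have p_gt1 := prime_gt1 p_pr.
have x_gt0 : 0 < x by apply: coprime_gt0 cop_x; lia.
have x_odd : odd x by move: cop_x; rewrite coprimeMr coprimen2 => /andP[].
have x_mod2 : x %% 2 = 1 by rewrite modn2 x_odd.
have p_mod2 : p %% 2 = 1 by rewrite modn2 p_odd.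
have := dvdn_trans (dvdn_mull 2 (dvdnn p)) (sqrt1_mod_dvd x_gt0 xx).
(* [x - 1] and [x + 1] are even and below [2 p], with [p] odd. *)
rewrite Euclid_dvdM // => /orP [] /dvdnP [c xc].
  by case: c xc => [|[|c]] xc; lia.
by case: c xc => [|[|[|c]]] xc; lia.
Qed.

Lemma generator_half_power q al h : unit_generator q al -> trivial_sqrt1 q ->
  1 < q -> totient q = h.*2 -> 0 < h -> al ^ h %% q = q - 1.
Proof.
move=> gen_al sqrt1 q_gt1 tot h_gt0; have [cop_al _] := gen_al.
have al_2h : al ^ h.*2 = 1 %[mod q] by rewrite -tot Euler_exp_totient.
have [| //] : al ^ h %% q = 1 \/ al ^ h %% q = q - 1.
- apply: sqrt1; first by rewrite ltn_mod; lia.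
  + by rewrite coprime_modl coprimeXl.
  + by rewrite modnMml modnMmr -expnD addnn al_2h.
- move=> al_h; have := totient_leq_period gen_al h_gt0.
  rewrite al_h modn_small // tot => /(_ erefl); lia.
Qed.

Lemma opp_unit_pow q al h i E : al ^ h %% q = q - 1 -> 0 < i < q ->
  i = al ^ E %[mod q] -> q - i = al ^ (E + h) %[mod q].
Proof.
move=> al_h /andP[i_gt0 i_lt_q] iE.
rewrite expnD -modnMml -iE -modnMmr al_h (modn_small i_lt_q).
have -> : i * (q - 1) = (i - 1) * q + (q - i) by nia.
by rewrite modnMDl.
Qed.

Lemma inD_pow q m f al E x : 0 < m -> 0 < f -> al ^ (m * f) = 1 %[mod q] ->
  x = al ^ E %[mod q] -> inD q m f al (E %% m) x.
Proof.
move=> m_gt0 f_gt0 al_mf xE; exists ((E %% (m * f)) %/ m).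
  by rewrite ltn_divLR // [f * m]mulnC ltn_pmod // muln_gt0 m_gt0.
rewrite xE (expn_modn_period al_mf) {1}(divn_eq (E %% (m * f)) m).
by rewrite modn_dvdm ?dvdn_mulr // mulnC.
Qed.

Section SymmetryOnUnits.

Variables (m u v f q al : nat) (zeta : algC) (a : nat -> algC).
Hypotheses (m_gt0 : 0 < m) (cop_um : coprime u m).
Hypothesis a_on_D : forall i k, i < q -> k < m ->
  inD q m f al (linperm m u v k) i -> a i = (zeta ^+ k)%R.

Lemma a_eq_same_class x y E1 E2 : 0 < f -> al ^ (m * f) = 1 %[mod q] ->
  x < q -> y < q -> x = al ^ E1 %[mod q] -> y = al ^ E2 %[mod q] ->
  E1 = E2 %[mod m] -> a x = a y.
Proof.
move=> f_gt0 al_mf x_lt_q y_lt_q xE yE E12.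
have [k k_lt_m kE] := linperm_onto v m_gt0 cop_um (ltn_pmod E1 m_gt0).
have a_k z E : z < q -> z = al ^ E %[mod q] -> E = E1 %[mod m] -> a z = (zeta ^+ k)%R.
  by move=> z_lt_q zE EE1; apply: a_on_D => //; rewrite kE -EE1; exact: inD_pow.
by rewrite (a_k x E1) ?(a_k y E2).
Qed.

Lemma symmetric_on_units : unit_generator q al -> trivial_sqrt1 q ->
  totient q = m * f -> ~~ odd f ->
  forall i, 0 < i < q -> coprime i q -> a i = a (q - i).
Proof.
move=> gen_al sqrt1 tot f_even i i_range cop_iq; have [cop_al onto_al] := gen_al.
have /andP[_ i_lt_q] := i_range; have q_gt1 : 1 < q by lia.
have f_gt0 : 0 < f by move: (totient_gt0 q); rewrite tot muln_gt0; lia.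
pose h := m * f./2.
have tot_h : totient q = h.*2 by rewrite tot /h doubleMr even_halfK.
have h_gt0 : 0 < h by move: tot_h (totient_gt0 q); lia.
have al_h := generator_half_power gen_al sqrt1 q_gt1 tot_h h_gt0.
have al_mf : al ^ (m * f) = 1 %[mod q] by rewrite -tot Euler_exp_totient.
have [E iE] := onto_al i i_lt_q cop_iq.
apply: (a_eq_same_class f_gt0 al_mf i_lt_q _ iE (opp_unit_pow al_h i_range iE)).
  by rewrite ltn_subrL; lia.
by rewrite /h addnC [m * _]mulnC modnMDl.
Qed.

End SymmetryOnUnits.

Local Open Scope ring_scope.

Theorem proposition8 (m u v : nat) (zeta : algC) (q : nat) (a : nat -> algC) :
  (0 < m)%N -> coprime u m -> m.-primitive_root zeta ->
  almost_sigma_case1 m u v zeta q a \/ almost_sigma_case2 m u v zeta q a ->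
  forall i : nat, (1 <= i <= q - 1)%N -> a i = a (q - i)%N.
Proof.
move=> m_gt0 cop_um _ [case1 | case2] i i_range; have i_range' : (0 < i < q)%N by lia.
- have [f [al [q_pr q_def f_even gen_al [_ _ a_on_D]]]] := case1.
  have tot : totient q = (m * f)%N by rewrite totient_prime // q_def addn1.
  have cop_iq : coprime i q.
    by rewrite coprime_sym prime_coprime //; apply/negP => /dvdn_leq; lia.
  exact: (symmetric_on_units m_gt0 cop_um a_on_D gen_al (trivial_sqrt1_prime q_pr)).
- have [p [f [al [p_pr q_def q_def' f_even [gen_al _ a_on_D a_nonunit]]]]] := case2.
  have p_def : p = (m * f + 1)%N by lia.
  have p_odd : odd p by rewrite p_def addn1 /= oddM negb_and f_even orbT.
  have tot : totient q = (m * f)%N.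
    rewrite q_def totient_coprime ?coprime2n // totient_prime // totient_prime //.
    by rewrite /= mul1n p_def addn1.
  have [cop_iq | ncop_iq] := boolP (coprime i q).
    apply: (symmetric_on_units m_gt0 cop_um a_on_D gen_al _ tot f_even) => //.
    by rewrite q_def; apply: trivial_sqrt1_double_prime.
  rewrite !a_nonunit ?coprime_subnl //; lia.
Qed.
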